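(* Consider the contextual learning setting in which all contexts $\sigma_1,\dots,\sigma_T$ lie in a known finite set $P\subseteq\Sigma$. Let $\Gamma\in[0,1]^{|\mathcal X|\times N}$ be $(\kappa,\delta)$-admissible, $\epsilon\ge0$, and $D$ a $\big(\rho,\frac{1+2\epsilon}{\delta}\big)$-dispersed distribution. Run Generalized FTPL in the contextual setting with translation matrix $\Gamma^P$ (one perturbation $\alpha_{\sigma,j}\sim D$ per column $(\sigma,j)\in P\times[N]$). Then the chosen policies $\pi_1,\dots,\pi_{T+1}$ satisfy \[ \mathbb E\Big[\sum_{t=1}^T f_c(\pi_{t+1},(\sigma_t,y_t))-f_c(\pi_t,(\sigma_t,y_t))\Big]\le 2TN\kappa\rho . \]
   Context: Original setting: finite learner action set $\mathcal X$, adversary action set $\mathcal Y$, payoff $f:\mathcal X\times\mathcal Y\to[0,1]$. Contextual setting: policy class $\Pi$ of maps $\Sigma\to\mathcal X$, adversary actions $(\sigma_t,y_t)\in\Sigma\times\mathcal Y$ fixed in advance, payoff $f_c(\pi,(\sigma,y))=f(\pi(\sigma),y)$. $\Gamma^P$: matrix with rows indexed by $\pi\in\Pi$, columns by $(\sigma,j)\in P\times[N]$, entries $\Gamma^P_{\pi,(\sigma,j)}=\Gamma_{\pi(\sigma),j}$. Generalized FTPL in the contextual setting: draw the perturbation vector $\vec\alpha$ once with i.i.d. $D$ entries; for $t=1,\dots,T+1$, $\pi_t$ is any policy with $\sum_{\tau<t}f_c(\pi_t,(\sigma_\tau,y_\tau))+\vec\alpha\cdot\Gamma^P_{\pi_t}\ge\sum_{\tau<t}f_c(\pi,(\sigma_\tau,y_\tau))+\vec\alpha\cdot\Gamma^P_{\pi}-\epsilon$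 for all $\pi\in\Pi$. $\Gamma$ is $(\kappa,\delta)$-admissible if its rows are distinct, each column has at most $\kappa$ distinct values, and distinct values in a column differ by at least $\delta$. $D$ is $(\rho,L)$-dispersed if every interval of length $L$ has probability at most $\rho$. *)

From HB Require Import structures.
From mathcomp Require Import all_boot all_order all_algebra.
From mathcomp Require Import all_classical all_reals all_analysis.
Set Implicit Arguments. Unset Strict Implicit. Unset Printing Implicit Defensive.
Import Order.TTheory GRing.Theory Num.Theory.
Local Open Scope classical_set_scope.
Local Open Scope ring_scope.

Definition admissible (R : realType) (X : finType) (N : nat)
    (Gamma : X -> 'I_N -> R) (kappa : nat) (delta : R) : Prop :=
  [/\
      (forall x x' : X, x <> x' -> exists j, Gamma x j <> Gamma x' j),
      (forall j, (size (undup [seq Gamma x j | x <- enum X]) <= kappa)%N) &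
      (forall j (x x' : X), Gamma x j <> Gamma x' j ->
                             delta <= `|Gamma x j - Gamma x' j|)].

Definition dispersed (R : realType) (D : probability R R) (rho L : R) : Prop :=
  forall a : R, (D [set` `[a, (a + L)%R]] <= rho%:E)%E.

Definition mutually_independent (d : measure_display) (Omega : measurableType d)
    (R : realType) (Pr : probability Omega R) (I : finType) (Z : I -> Omega -> R)
    : Prop :=
  forall B : I -> set R, (forall i, measurable (B i)) ->
    Pr (\bigcap_(i in [set: I]) (Z i @^-1` B i)) =
    \big[*%E/1%E]_(i : I) Pr (Z i @^-1` B i).

Definition identically_distributed (d : measure_display) (Omega : measurableType d)
    (R : realType) (Pr : probability Omega R) (I : finType) (Z : I -> Omega -> R)
    (D : probability R R) : Prop :=
  forall i (B : set R), measurable B -> Pr (Z i @^-1` B) = D B.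

Definition fc (Sigma X Y : Type) (R : realType) (f : X -> Y -> R)
    (pi : Sigma -> X) (sigma : Sigma) (y : Y) : R := f (pi sigma) y.

(* Row pi of Gamma^P dotted with the perturbation vector alpha, where
   P is a finite set of contexts embedded in Sigma by iota, and
   Gamma^P_{pi,(s,j)} = Gamma_{pi(s), j}. *)
Definition pert_dot (Sigma : Type) (X P : finType) (N : nat) (R : realType)
    (iota : P -> Sigma) (Gamma : X -> 'I_N -> R) (alpha : P -> 'I_N -> R)
    (pi : Sigma -> X) : R :=
  \sum_(s : P) \sum_(j < N) alpha s j * Gamma (pi (iota s)) j.

Definition cum_payoff (Sigma X Y : Type) (P : finType) (R : realType)
    (iota : P -> Sigma) (f : X -> Y -> R) (sigma : nat -> P) (y : nat -> Y)
    (t : nat) (pi : Sigma -> X) : R :=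
  \sum_(tau < t) fc f pi (iota (sigma tau)) (y tau).

From HB Require Import structures.
From mathcomp Require Import all_boot all_order all_algebra.
From mathcomp Require Import all_classical all_reals all_analysis.
From mathcomp Require Import ring lra.
Set Implicit Arguments. Unset Strict Implicit. Unset Printing Implicit Defensive.
Import Order.TTheory GRing.Theory Num.Theory.
Local Open Scope classical_set_scope.
Local Open Scope ring_scope.
(* Fix a round t and a column (sigma_t, j) of Gamma^P.  If pi_(t+1) and pi_t
   choose different actions at sigma_t, admissibility yields a column j where
   their Gamma-entries differ by at least delta.  Viewing the perturbed
   objectives of rounds t and t+1 (which differ by a payoff in [0,1]) as affine
   functions of the single perturbation alpha_(sigma_t, j), eps-optimality of
   pi_t and of pi_(t+1) pins alpha_(sigma_t, j) to a window of width
   (1 + 2 eps) / delta, whose position depends only on the other perturbations,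
   on the new entry (one of at most kappa values) and on the direction of the
   change.  By independence and dispersion each window is hit with probability
   at most rho, so a union bound over j, the kappa values and the two directions
   bounds the expected change of payoff in round t by 2 N kappa rho. *)

Section FiniteExtremum.
Variables (R : realType) (Q : finType).
Implicit Types (A : {pred Q}) (F : Q -> R).

(* Seeding with a member [F q0] of the family makes this the true maximum; the
   value [0] on an empty [A] is junk. *)
Definition bigmax_on A F : R :=
  if [pick q in A] is Some q0 then \big[Num.max/F q0]_(q in A) F q else 0.

Definition bigmin_on A F : R := - bigmax_on A (fun q => - F q).

Lemma bigmax_on_ge A F q : q \in A -> F q <= bigmax_on A F.
Proof.
move=> Aq; rewrite /bigmax_on; case: pickP => [q0 _|/(_ q)]; last by rewrite Aq.
exact: le_bigmax_cond.
Qed.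

Lemma bigmax_on_le A F q z :
  q \in A -> (forall q', q' \in A -> F q' <= z) -> bigmax_on A F <= z.
Proof.
move=> Aq Fz; rewrite /bigmax_on; case: pickP => [q0 Aq0|/(_ q)]; last by rewrite Aq.
by apply: bigmax_le => //; exact: Fz.
Qed.

Lemma bigmin_on_le A F q : q \in A -> bigmin_on A F <= F q.
Proof. by move=> Aq; rewrite /bigmin_on lerNl; exact: bigmax_on_ge. Qed.

Lemma bigmin_on_ge A F q z :
  q \in A -> (forall q', q' \in A -> z <= F q') -> z <= bigmin_on A F.
Proof.
move=> Aq zF; rewrite /bigmin_on lerNr.
by apply: (@bigmax_on_le A (fun q => - F q) q _ Aq) => q' /zF; rewrite lerN2.
Qed.

Lemma measurable_bigmax_on d (Omega : measurableType d) A (F : Q -> Omega -> R) :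
  (forall q, measurable_fun setT (F q)) ->
  measurable_fun setT (fun w => bigmax_on A (F^~ w)).
Proof.
move=> mF; rewrite /bigmax_on; case: pickP => [q0 _|_]; last exact: measurable_cst.
elim: (index_enum Q) => [|q s IH].
  by under eq_fun do rewrite big_nil; exact: mF.
under eq_fun do rewrite big_cons; case: (q \in A) => //.
exact: measurable_realfun.measurable_maxr.
Qed.

Lemma measurable_bigmin_on d (Omega : measurableType d) A (F : Q -> Omega -> R) :
  (forall q, measurable_fun setT (F q)) ->
  measurable_fun setT (fun w => bigmin_on A (F^~ w)).
Proof.
move=> mF; apply: measurable_realfun.measurable_funN.
by apply: measurable_bigmax_on => q; exact: measurable_realfun.measurable_funN.
Qed.

End FiniteExtremum.

(* [G0 + a * beta] and [G1 + a * beta] are the objectives of two consecutive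
   rounds as functions of one perturbation coordinate [a].  If an
   [eps]-maximizer of the first has [beta > b] and one of the second has
   [beta = b], then [a] lies in a window of width [(1 + 2 eps) / delta] whose
   position depends on [G0] only. *)
Section SwitchWindow.
Variables (R : realType) (Q : finType) (feasible : pred Q) (G0 G1 beta : Q -> R).
Variables (b eps delta : R).

Definition level_max : R := bigmax_on [pred q | feasible q && (beta q == b)] G0.

Definition switch_threshold : R :=
  bigmin_on [pred q | feasible q && (b < beta q)]
            (fun q => (level_max - G0 q - eps) / (beta q - b)).

Variables (a : R) (q1 q2 : Q).
Hypotheses (feasible_q1 : feasible q1) (beta_q1 : b < beta q1).
Hypotheses (feasible_q2 : feasible q2) (beta_q2 : beta q2 = b).

Lemma switch_threshold_le :
  (forall q, feasible q -> G0 q + a * beta q - eps <= G0 q1 + a * beta q1) ->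
  switch_threshold <= a.
Proof.
move=> opt0.
have Aq1 : q1 \in [pred q | feasible q && (b < beta q)] by rewrite inE feasible_q1 beta_q1.
apply: le_trans (bigmin_on_le _ Aq1) _.
rewrite ler_pdivrMr ?subr_gt0 //.
have : level_max <= G0 q1 + a * beta q1 - a * b + eps.
  apply: (bigmax_on_le (q := q2)); first by rewrite inE feasible_q2 beta_q2 eqxx.
  by move=> q /andP[Fq /eqP bq]; have := opt0 q Fq; rewrite bq; lra.
by rewrite mulrBr; lra.
Qed.

Lemma le_switch_threshold :
  0 <= eps -> 0 < delta ->
  (forall q, feasible q -> G0 q <= G1 q) -> G1 q2 <= G0 q2 + 1 ->
  (forall q, feasible q -> b < beta q -> delta <= beta q - b) ->
  (forall q, feasible q -> G1 q + a * beta q - eps <= G1 q2 + a * beta q2) ->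
  a <= switch_threshold + (1 + 2 * eps) / delta.
Proof.
move=> eps0 delta0 G01 G12 gap opt1; rewrite -lerBlDr.
apply: (bigmin_on_ge (q := q1)); first by rewrite inE feasible_q1 beta_q1.
move=> q /andP[Fq bq]; have pos : 0 < beta q - b by rewrite subr_gt0.
have le_level_max : G0 q2 <= level_max by apply: bigmax_on_ge; rewrite inE feasible_q2 beta_q2 eqxx.
have : a * (beta q - b) <= (level_max - G0 q - eps) + (1 + 2 * eps).
  by have := opt1 q Fq; have := G01 q Fq; rewrite beta_q2 mulrBr; lra.
rewrite -ler_pdivlMr // mulrDl lerBlDr => /le_trans; apply; rewrite lerD2l.
by apply: ler_wpM2l; [lra | rewrite lef_pV2 ?posrE ?gap].
Qed.

End SwitchWindow.

Section IndependentCoordinate.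
Variables (R : realType) (d : measure_display) (Omega : measurableType d).
Variables (Pr : probability Omega R) (I : finType) (Z : I -> Omega -> R).
Variables (i0 : I) (D : probability R R).
Hypothesis mZ : forall i, measurable_fun setT (Z i).
Hypothesis indepZ : mutually_independent Pr Z.
Hypothesis lawZ : identically_distributed Pr Z D.

(* Cylinders leaving [Z i0] free; they generate the sigma-algebra of the
   coordinates other than [i0]. *)
Definition off_rect : set (set Omega) := [set A | exists B : I -> set R,
  [/\ forall i, measurable (B i), B i0 = setT &
      A = \bigcap_(i in [set: I]) (Z i @^-1` B i)]].

Lemma measurable_Z_preimage i B : measurable B -> measurable (Z i @^-1` B).
Proof. by move=> mB; rewrite -[X in measurable X]setTI; exact: mZ. Qed.

Lemma sub_gen_off_rect_measurable : <<s off_rect >> `<=` measurable.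
Proof.
apply: smallest_sub; first exact: sigma_algebra_measurable.
move=> _ [B [mB _ ->]]; apply: fin_bigcap_measurable; first exact: finite_finset.
by move=> i _; exact: measurable_Z_preimage.
Qed.

Local Open Scope ereal_scope.

Lemma prob_off_rect_setI A B0 : off_rect A -> measurable B0 ->
  Pr (A `&` Z i0 @^-1` B0) = Pr A * D B0.
Proof.
move=> [B [mB Bi0 ->]] mB0.
pose B' i := if i == i0 then B0 else B i.
have mB' i : measurable (B' i) by rewrite /B'; case: ifP.
have -> : \bigcap_(i in [set: I]) (Z i @^-1` B i) `&` Z i0 @^-1` B0 =
          \bigcap_(i in [set: I]) (Z i @^-1` B' i).
  apply/seteqP; split => w /=.
    by move=> [H1 H2] i _; rewrite /B'; case: ifP => [/eqP->//|_]; exact: H1.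
  move=> H; split; last by have := H i0 Logic.I; rewrite /B' eqxx.
  by move=> i _; have := H i Logic.I; rewrite /B'; case: ifP => [/eqP->|//]; rewrite Bi0.
rewrite !indepZ // (bigD1 i0) //= [X in _ = X * _](bigD1 i0) //= /B' eqxx Bi0.
rewrite preimage_setT probability_setT mul1e muleC lawZ //.
by congr (_ * _); apply: eq_bigr => i /negbTE ->.
Qed.

(* Dynkin's pi-lambda theorem extends the product rule from the cylinders to
   the sigma-algebra they generate. *)
Lemma prob_gen_off_rect_setI B0 : measurable B0 -> forall A, <<s off_rect >> A ->
  Pr (A `&` Z i0 @^-1` B0) = Pr A * D B0.
Proof.
move=> mB0; have mE := measurable_Z_preimage i0 mB0.
have fin_DB0 : D B0 \is a fin_num by rewrite fin_num_measure.
apply: (@dynkin_induction _ (g_sigma_algebraType off_rect) off_rect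
   [set A | Pr (A `&` Z i0 @^-1` B0) = Pr A * D B0]) => //.
- move=> _ _ [B [mB Bi0 ->]] [C [mC Ci0 ->]].
  exists (fun i => B i `&` C i); split; first by move=> i; exact: measurableI.
    by rewrite Bi0 Ci0 setIT.
  apply/seteqP; split => w /=; first by move=> [H1 H2] i _; split; [exact: H1|exact: H2].
  by move=> H; split => i _; have [] := H i Logic.I.
- by rewrite /= setTI probability_setT mul1e lawZ.
- by move=> A RA; exact: prob_off_rect_setI.
- move=> S mS /= PS; have mS' := sub_gen_off_rect_measurable mS.
  have -> : Pr (~` S `&` Z i0 @^-1` B0) =
      Pr (Z i0 @^-1` B0) - Pr (Z i0 @^-1` B0 `&` S).
    by rewrite setIC -setDE measureD // -ge0_fin_numE // fin_num_measure.
  rewrite [_ `&` S]setIC PS probability_setC // lawZ //.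
  have fin_S : Pr S \is a fin_num by rewrite fin_num_measure.
  rewrite -(fineK fin_S) -(fineK fin_DB0) -EFinM -!EFinB -EFinM.
  by rewrite mulrBl mul1r.
- move=> F mF tF PF /=; have mF' n := sub_gen_off_rect_measurable (mF n).
  rewrite setI_bigcupl measure_bigcup //; last first.
  - apply/trivIsetP => i j _ _ ij; rewrite setIACA setIid.
    by move/trivIsetP : tF => /(_ i j Logic.I Logic.I ij) ->; rewrite set0I.
  - by move=> i _; exact: measurableI.
  rewrite [Pr (\bigcup_k F k)]measure_bigcup //.
  transitivity (\sum_(i <oo | i \in [set: nat]) (Pr (F i) * D B0)).
    by apply: eq_eseriesr => i _; exact: PF.
  rewrite -(fineK fin_DB0) muleC -nneseriesZl //.
  by apply: eq_eseriesr => i _; rewrite muleC.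
Qed.

Definition Omega_off := g_sigma_algebraType off_rect.
Definition to_off (w : Omega) : Omega_off := w.

Lemma measurable_to_off : measurable_fun setT to_off.
Proof. by move=> _ A mA; rewrite setTI; exact: sub_gen_off_rect_measurable. Qed.

HB.instance Definition _ := isMeasurableFun.Build _ _ _ _ to_off measurable_to_off.

Definition off_coord_pair (w : Omega) : Omega_off * R := (to_off w, Z i0 w).

Lemma measurable_off_coord_pair : measurable_fun setT off_coord_pair.
Proof. by apply: measurable_fun_pair; [exact: measurable_to_off|exact: mZ]. Qed.

HB.instance Definition _ :=
  isMeasurableFun.Build _ _ _ _ off_coord_pair measurable_off_coord_pair.

Lemma distribution_off_coord_pair E : measurable E ->
  (distribution Pr to_off \x D) E = distribution Pr off_coord_pair E.
Proof.
apply: product_measure_unique => A B mA mB.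
change (Pr (to_off @^-1` A `&` Z i0 @^-1` B) = Pr (to_off @^-1` A) * D B).
exact: prob_gen_off_rect_setI.
Qed.

Lemma measurable_coord_off i : i != i0 -> measurable_fun setT (fun w : Omega_off => Z i w).
Proof.
move=> ne _ B mB; rewrite setTI; apply: sub_gen_smallest.
exists (fun k => if k == i then B else setT); split; first by move=> k; case: ifP.
  by rewrite eq_sym (negbTE ne).
apply/seteqP; split => w /=; first by move=> Bw k _; case: ifP => [/eqP->//|].
by move=> H; have := H i Logic.I; rewrite eqxx.
Qed.

(* A band of width [c] around a threshold that depends only on the other
   coordinates catches [Z i0] with probability at most [rho]: integrate the
   [D]-measure of the section over the law of the other coordinates. *)
Lemma prob_band_le (thr : Omega_off -> R) (c rho : R) :
  measurable_fun setT thr -> dispersed D rho c ->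
  Pr [set w | (thr w <= Z i0 w <= thr w + c)%R] <= rho%:E.
Proof.
move=> mthr Drho.
pose S := [set p : Omega_off * R | (thr p.1 <= p.2 <= thr p.1 + c)%R].
have mS : measurable S.
  have -> : S = (fun p : Omega_off * R => p.2 - thr p.1)%R @^-1` [set` `[0%R, c]].
    by apply/seteqP; split => p; rewrite /S /= in_itv /= subr_ge0 lerBlDl.
  rewrite -[X in measurable X]setTI; apply: measurable_realfun.measurable_funB => //.
  exact: measurableT_comp mthr measurable_fst.
change (distribution Pr off_coord_pair S <= rho%:E).
rewrite -distribution_off_coord_pair // /product_measure1 /=.
apply: le_trans (_ : \int[distribution Pr to_off]_x (cst rho%:E) x <= _); last first.
  by rewrite integral_cst //= probability_setT mule1.
apply: ge0_le_integral => //; first exact: measurable_fun_xsection.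
move=> x _; have -> : xsection S x = [set` `[thr x, (thr x + c)%R]].
  by apply/seteqP; split => z; rewrite /xsection /= inE /= in_itv.
exact: Drho.
Qed.

End IndependentCoordinate.

Section ExpectationBound.
Variables (R : realType) (d : measure_display) (Omega : measurableType d).
Variable (Pr : probability Omega R).

Lemma measurable_fun_finite_valued (X : finType) (h : Omega -> X) (phi : X -> R) :
  (forall x, measurable [set w | h w = x]) -> measurable_fun setT (fun w => phi (h w)).
Proof.
move=> mh _ B mB; rewrite setTI.
have -> : (fun w => phi (h w)) @^-1` B = \bigcup_(x in [set x | B (phi x)]) [set w | h w = x].
  by apply/seteqP; split => [w Bw|w [x /= Bx hx]]; [exists (h w)|rewrite /preimage /= hx].
by apply: fin_bigcup_measurable => //; exact: finite_finset.
Qed.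

Lemma integrable_bounded (g : Omega -> R) (K : R) :
  measurable_fun setT g -> (forall w, `|g w| <= K) -> Pr.-integrable setT (EFin \o g).
Proof.
move=> mg gK; apply: measurable_bounded_integrable => //.
  by rewrite -ge0_fin_numE // fin_num_measure.
exists K; split; first by rewrite num_real.
by move=> M KM w _; exact: le_trans (gK w) (ltW KM).
Qed.

Local Open Scope ereal_scope.

Lemma integral_le_card_events (I : finType) (E : I -> set Omega) (g : Omega -> R)
    (K rho : R) :
  measurable_fun setT g -> (forall w, `|g w| <= K)%R ->
  (forall i, measurable (E i)) -> (forall i, Pr (E i) <= rho%:E) ->
  (forall w, g w <= \sum_(i : I) \1_(E i) w)%R ->
  \int[Pr]_w (g w)%:E <= (#|I|%:R * rho)%:E.
Proof.
move=> mg gK mE PrE gE.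
have mind i : measurable_fun setT (\1_(E i) : Omega -> R).
  exact: measurable_realfun.measurable_indic.
have ind01 i w : (0 <= (\1_(E i) w : R) <= 1)%R.
  by rewrite indicE; case: (w \in E i); rewrite /= ?lexx ?ler01.
have Hbound w : (`|\sum_(i : I) (\1_(E i) w : R)| <= #|I|%:R)%R.
  rewrite ger0_norm; last by apply: sumr_ge0 => i _; case/andP: (ind01 i w).
  by rewrite -sum1_card natr_sum; apply: ler_sum => i _; case/andP: (ind01 i w).
apply: (@le_trans _ _ (\int[Pr]_w (\sum_(i : I) (\1_(E i) w : R))%:E)).
  apply: le_integral => [//|||w _]; last by rewrite lee_fin; exact: gE.
    exact: (integrable_bounded mg gK).
  by apply: integrable_bounded Hbound; exact: measurable_sum.
under eq_integral do rewrite -sumEFin.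
rewrite ge0_integral_sum //; last by move=> i; exact/measurable_realfun.measurable_EFinP.
rewrite -sum1_card natr_sum mulr_suml -sumEFin; apply: lee_sum => i _.
by rewrite integral_indic // setIT mul1r; exact: PrE.
Qed.

End ExpectationBound.

Lemma admissible_signed_gap (R : realType) (X : finType) (N : nat)
    (Gamma : X -> 'I_N -> R) (kappa : nat) (delta : R) (dir : bool) x x' j :
  admissible Gamma kappa delta ->
  (-1) ^+ dir * Gamma x' j < (-1) ^+ dir * Gamma x j ->
  delta <= (-1) ^+ dir * Gamma x j - (-1) ^+ dir * Gamma x' j.
Proof.
case=> _ _ sep lt_x'x; rewrite -mulrBr.
have ne : Gamma x j <> Gamma x' j by move=> eq; move: lt_x'x; rewrite eq ltxx.
by rewrite -[leRHS]gtr0_norm ?normrMsign ?sep // mulrBr subr_gt0.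
Qed.

Section ContextualFTPL.
Variables (R : realType) (X : finType) (Y Sigma : Type) (f : X -> Y -> R).
Variables (N : nat) (Gamma : X -> 'I_N -> R) (kappa : nat) (delta eps rho : R).
Variables (D : probability R R) (P : finType) (iota : P -> Sigma).
Variables (Pi : set (Sigma -> X)) (T : nat) (sigma : nat -> P) (y : nat -> Y).
Variables (d : measure_display) (Omega : measurableType d) (Pr : probability Omega R).
Variables (alpha : Omega -> P -> 'I_N -> R) (pi : nat -> (P -> 'I_N -> R) -> Sigma -> X).

Definition perturbation (sj : P * 'I_N) (w : Omega) : R := alpha w sj.1 sj.2.

(* Policies only matter through their restriction to the finite context set [P]. *)
Definition restrict (p : Sigma -> X) : {ffun P -> X} := [ffun s => p (iota s)].

Definition feasible (q : {ffun P -> X}) : bool := `[< exists2 p, Pi p & restrict p = q >].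

Definition payoff_off (t : nat) (i0 : P * 'I_N) (q : {ffun P -> X}) (w : Omega) : R :=
  \sum_(tau < t) f (q (sigma tau)) (y tau)
  + \sum_(sj | sj != i0) alpha w sj.1 sj.2 * Gamma (q sj.1) sj.2.

Lemma perturbed_payoff_split t i0 p w :
  cum_payoff iota f sigma y t p + pert_dot iota Gamma (alpha w) p =
  payoff_off t i0 (restrict p) w + alpha w i0.1 i0.2 * Gamma (restrict p i0.1) i0.2.
Proof.
rewrite /cum_payoff /pert_dot /payoff_off /fc -addrA; congr (_ + _).
  by apply: eq_bigr => tau _; rewrite ffunE.
rewrite pair_big (bigD1 i0) //= addrC; congr (_ + _); last by rewrite ffunE.
by apply: eq_bigr => sj _; rewrite ffunE.
Qed.

Lemma payoff_offS t i0 q w :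
  payoff_off t.+1 i0 q w = payoff_off t i0 q w + f (q (sigma t)) (y t).
Proof. by rewrite /payoff_off big_ord_recr addrAC. Qed.

Definition window_width : R := (1 + 2 * eps) / delta.

(* For [dir = true] the window is obtained for [- alpha], hence the reflection. *)
Definition threshold t (s0 : P) (j0 : 'I_N) (b : R) (dir : bool) (w : Omega) : R :=
  let m := switch_threshold feasible (fun q => payoff_off t (s0, j0) q w)
             (fun q => (-1) ^+ dir * Gamma (q s0) j0) ((-1) ^+ dir * b) eps in
  if dir then - m - window_width else m.

Definition switch_event t s0 j0 b dir : set Omega :=
  [set w | threshold t s0 j0 b dir w <= alpha w s0 j0 <= threshold t s0 j0 b dir w + window_width].

Hypothesis f01 : forall x yy, 0 <= f x yy <= 1.
Hypothesis delta0 : 0 < delta.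
Hypothesis adm : admissible Gamma kappa delta.
Hypothesis eps0 : 0 <= eps.
Hypothesis ftpl : forall t w, (t <= T)%N ->
  Pi (pi t (alpha w)) /\
  forall pi' : Sigma -> X, Pi pi' ->
    cum_payoff iota f sigma y t (pi t (alpha w))
      + pert_dot iota Gamma (alpha w) (pi t (alpha w))
    >= cum_payoff iota f sigma y t pi' + pert_dot iota Gamma (alpha w) pi' - eps.

Lemma feasible_restrict t w : (t <= T)%N -> feasible (restrict (pi t (alpha w))).
Proof. by move=> tT; apply/asboolP; exists (pi t (alpha w)) => //; case: (ftpl w tT). Qed.

Lemma ftpl_restrict t w i0 q : (t <= T)%N -> feasible q ->
  payoff_off t i0 q w + alpha w i0.1 i0.2 * Gamma (q i0.1) i0.2 - eps <=
  payoff_off t i0 (restrict (pi t (alpha w))) w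
    + alpha w i0.1 i0.2 * Gamma (restrict (pi t (alpha w)) i0.1) i0.2.
Proof.
move=> tT /asboolP[p Pip <-]; have [_ opt] := ftpl w tT.
by have := opt p Pip; rewrite !(perturbed_payoff_split t i0).
Qed.

Lemma alpha_in_switch_event t w j0 (dir : bool) : (t < T)%N ->
  let b := Gamma (pi t.+1 (alpha w) (iota (sigma t))) j0 in
  (-1) ^+ dir * b < (-1) ^+ dir * Gamma (pi t (alpha w) (iota (sigma t))) j0 ->
  switch_event t (sigma t) j0 b dir w.
Proof.
move=> tT b lt_b; set sg : R := (-1) ^+ dir; set s0 := sigma t.
pose G k q := payoff_off k (s0, j0) q w.
pose beta (q : {ffun P -> X}) := sg * Gamma (q s0) j0.
pose q_ k := restrict (pi k (alpha w)).
have sgK z : sg * alpha w s0 j0 * (sg * z) = alpha w s0 j0 * z.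
  by rewrite mulrACA -signr_addb addbb mul1r.
have opt k : (k <= T)%N -> forall q, feasible q ->
    G k q + sg * alpha w s0 j0 * beta q - eps <=
    G k (q_ k) + sg * alpha w s0 j0 * beta (q_ k).
  by move=> kT q Fq; rewrite /beta !sgK; exact: ftpl_restrict.
have F1 := feasible_restrict w (ltnW tT); have F2 := feasible_restrict w tT.
have beta_q1 : sg * b < beta (q_ t) by rewrite /beta ffunE.
have beta_q2 : beta (q_ t.+1) = sg * b by rewrite /beta ffunE.
have lo := switch_threshold_le (G0 := G t) F1 beta_q1 F2 beta_q2 (opt t (ltnW tT)).
have G01 q : feasible q -> G t q <= G t.+1 q.
  by move=> _; rewrite /G payoff_offS lerDl; case/andP: (f01 (q (sigma t)) (y t)).
have G12 : G t.+1 (q_ t.+1) <= G t (q_ t.+1) + 1.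
  by rewrite /G payoff_offS lerD2l; case/andP: (f01 (q_ t.+1 (sigma t)) (y t)).
have gap q : feasible q -> sg * b < beta q -> delta <= beta q - sg * b.
  by move=> _; exact: admissible_signed_gap adm.
have hi := le_switch_threshold F1 beta_q1 F2 beta_q2 eps0 delta0 G01 G12 gap (opt t.+1 tT).
rewrite /switch_event /threshold /window_width -/sg -/beta /=.
move: lo hi; rewrite /sg /G.
by destruct dir; rewrite /= ?expr0 ?expr1 ?mul1r ?mulN1r => lo hi; apply/andP; split; lra.
Qed.

Hypothesis malpha : forall s j, measurable_fun setT (fun w => alpha w s j).
Hypothesis indep : mutually_independent Pr perturbation.
Hypothesis law : identically_distributed Pr perturbation D.
Hypothesis disp : dispersed D rho window_width.

Local Notation Omega_others i0 := (Omega_off perturbation i0).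

Let measurable_perturbation sj : measurable_fun setT (perturbation sj) :=
  malpha sj.1 sj.2.

Lemma measurable_payoff_off t i0 q :
  measurable_fun setT (fun w : Omega_others i0 => payoff_off t i0 q w).
Proof.
apply: measurable_realfun.measurable_funD => //.
under eq_fun do rewrite big_mkcond /=.
apply: measurable_sum => sj; case: eqP => [_|/eqP ne] //.
apply: measurable_realfun.measurable_funM => //.
exact: (measurable_coord_off (Z := perturbation) ne).
Qed.

Lemma measurable_threshold t s0 j0 b dir :
  measurable_fun setT (fun w : Omega_others (s0, j0) => threshold t s0 j0 b dir w).
Proof.
have mswitch : measurable_fun setT (fun w : Omega_others (s0, j0) =>
    switch_threshold feasible (fun q => payoff_off t (s0, j0) q w)
      (fun q => (-1) ^+ dir * Gamma (q s0) j0) ((-1) ^+ dir * b) eps).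
  apply: measurable_bigmin_on => q.
  apply: measurable_realfun.measurable_funM => //.
  apply: measurable_realfun.measurable_funB => //.
  apply: measurable_realfun.measurable_funB; last exact: measurable_payoff_off.
  by apply: measurable_bigmax_on => q'; exact: measurable_payoff_off.
rewrite /threshold; case: dir mswitch => mswitch //.
by apply: measurable_realfun.measurable_funB => //; exact: measurable_realfun.measurable_funN.
Qed.

Lemma measurable_switch_event t s0 j0 b dir : measurable (switch_event t s0 j0 b dir).
Proof.
have -> : switch_event t s0 j0 b dir =
    (fun w => alpha w s0 j0 - threshold t s0 j0 b dir w) @^-1` [set` `[0, window_width]].
  by apply/seteqP; split => w; rewrite /switch_event /= in_itv /= subr_ge0 lerBlDl.
have mthr : measurable_fun setT (threshold t s0 j0 b dir).
  exact: measurableT_comp (@measurable_threshold t s0 j0 b dir)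
    (measurable_to_off (i0 := (s0, j0)) measurable_perturbation).
by rewrite -[X in measurable X]setTI; exact: measurable_realfun.measurable_funB.
Qed.

Lemma prob_switch_event_le t s0 j0 b dir : (Pr (switch_event t s0 j0 b dir) <= rho%:E)%E.
Proof.
exact: (prob_band_le (Z := perturbation) (i0 := (s0, j0)) measurable_perturbation
  indep law (@measurable_threshold t s0 j0 b dir) disp).
Qed.

Definition column_values (j : 'I_N) : seq R := undup [seq Gamma x j | x <- enum X].

(* A switch at coordinate [j] is indexed by the position of the new value of
   column [j] among its at most [kappa] distinct values and by its direction;
   positions beyond [size (column_values j)] only add harmless events. *)
Definition round_event t (r : 'I_N * 'I_kappa * bool) : set Omega :=
  switch_event t (sigma t) r.1.1 (nth 0 (column_values r.1.1) r.1.2) r.2.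

Lemma round_gain_le_events t w : (t < T)%N ->
  fc f (pi t.+1 (alpha w)) (iota (sigma t)) (y t)
    - fc f (pi t (alpha w)) (iota (sigma t)) (y t)
  <= \sum_(r : 'I_N * 'I_kappa * bool) \1_(round_event t r) w.
Proof.
move=> tT; rewrite /fc.
set x1 := pi t (alpha w) (iota (sigma t)); set x2 := pi t.+1 (alpha w) (iota (sigma t)).
have ind_ge0 r : 0 <= \1_(round_event t r) w :> R by rewrite indicE; case: (_ \in _).
case: (eqVneq x2 x1) => [->|ne]; first by rewrite subrr sumr_ge0.
have [adm_rows adm_kappa _] := adm.
have [j ne_j] : exists j, Gamma x2 j <> Gamma x1 j by apply: adm_rows; apply/eqP.
have b_in : Gamma x2 j \in column_values j by rewrite mem_undup map_f ?mem_enum.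
have k_lt : (index (Gamma x2 j) (column_values j) < kappa)%N.
  by apply: leq_trans (adm_kappa j); rewrite index_mem.
pose r := (j, Ordinal k_lt, Gamma x1 j < Gamma x2 j).
have w_in : w \in round_event t r.
  rewrite inE /round_event /= nth_index //; apply: alpha_in_switch_event => //.
  rewrite -/x1 -/x2; case: (ltgtP (Gamma x1 j) (Gamma x2 j)) ne_j => [lt _|lt _|-> //].
    by rewrite expr1 !mulN1r ltrN2.
  by rewrite expr0 !mul1r.
apply: le_trans (_ : (\1_(round_event t r) w : R) <= _).
  by rewrite indicE w_in mulr1n; case/andP: (f01 x2 (y t)); case/andP: (f01 x1 (y t)); lra.
by rewrite (bigD1 r) //= lerDl sumr_ge0.
Qed.

Definition stability_sum (w : Omega) : R :=
  \sum_(t < T) (fc f (pi t.+1 (alpha w)) (iota (sigma t)) (y t)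
                - fc f (pi t (alpha w)) (iota (sigma t)) (y t)).

Lemma stability_sum_le_events w :
  stability_sum w <= \sum_(i : 'I_T * ('I_N * 'I_kappa * bool)) \1_(round_event i.1 i.2) w.
Proof.
rewrite -(pair_bigA _ (fun (t : 'I_T) r => (\1_(round_event t r) w : R))) /=.
by apply: ler_sum => t _; exact: round_gain_le_events.
Qed.

Lemma norm_stability_sum_le w : `|stability_sum w| <= T%:R.
Proof.
apply: le_trans (ler_norm_sum _ _ _) _.
rewrite -[T in leRHS]card_ord -sumr_const; apply: ler_sum => t _.
case/andP: (f01 (pi t.+1 (alpha w) (iota (sigma t))) (y t)).
case/andP: (f01 (pi t (alpha w) (iota (sigma t))) (y t)).
by rewrite /fc ler_norml; lra.
Qed.

Hypothesis mpi : forall t s x, (t <= T)%N -> measurable [set w | pi t (alpha w) (iota s) = x].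

Lemma measurable_stability_sum : measurable_fun setT stability_sum.
Proof.
have mfc k t : (k <= T)%N ->
    measurable_fun setT (fun w => fc f (pi k (alpha w)) (iota (sigma t)) (y t)).
  move=> kT; apply: (measurable_fun_finite_valued (fun x => f x (y t))
    (h := fun w => pi k (alpha w) (iota (sigma t)))) => x.
  exact: mpi.
apply: measurable_sum => t; have tT := ltn_ord t.
by apply: measurable_realfun.measurable_funB; apply: mfc => //; exact: ltnW.
Qed.

End ContextualFTPL.

Theorem lemma4p3
  (R : realType) (X : finType) (Y Sigma : Type) (f : X -> Y -> R)
  (N : nat) (Gamma : X -> 'I_N -> R) (kappa : nat) (delta eps rho : R)
  (D : probability R R)
  (P : finType) (iota : P -> Sigma) (Pi : set (Sigma -> X))
  (T : nat) (sigma : nat -> P) (y : nat -> Y)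
  (d : measure_display) (Omega : measurableType d) (Pr : probability Omega R)
  (alpha : Omega -> P -> 'I_N -> R)
  (pi : nat -> (P -> 'I_N -> R) -> Sigma -> X) :
  (forall x yy, 0 <= f x yy <= 1) ->
  injective iota ->
  (forall x j, 0 <= Gamma x j <= 1) ->
  0 < delta -> admissible Gamma kappa delta ->
  0 <= eps ->
  dispersed D rho ((1 + 2 * eps) / delta) ->
  (forall s j, measurable_fun setT (fun w => alpha w s j)) ->
  mutually_independent Pr (fun sj : P * 'I_N => fun w => alpha w sj.1 sj.2) ->
  identically_distributed Pr (fun sj : P * 'I_N => fun w => alpha w sj.1 sj.2) D ->
  (forall t s x, (t <= T)%N ->
     measurable [set w | pi t (alpha w) (iota s) = x]) ->
  (forall t w, (t <= T)%N ->
     Pi (pi t (alpha w)) /\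
     forall pi' : Sigma -> X, Pi pi' ->
       cum_payoff iota f sigma y t (pi t (alpha w))
         + pert_dot iota Gamma (alpha w) (pi t (alpha w))
       >= cum_payoff iota f sigma y t pi'
         + pert_dot iota Gamma (alpha w) pi' - eps) ->
  (\int[Pr]_w
     (\sum_(t < T) (fc f (pi t.+1 (alpha w)) (iota (sigma t)) (y t)
                    - fc f (pi t (alpha w)) (iota (sigma t)) (y t)))%:E
   <= (2 * T%:R * N%:R * kappa%:R * rho)%:E)%E.
Proof.
move=> f01 _ _ delta0 adm eps0 disp malpha indep law mpi ftpl.
apply: le_trans (integral_le_card_events (rho := rho) (measurable_stability_sum _ _ _ mpi)
  (norm_stability_sum_le _ _ _ _ _ _ f01) _ _
  (stability_sum_le_events f01 delta0 adm eps0 ftpl)) _.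
- by move=> i; apply: measurable_switch_event; exact: malpha.
- by move=> i; apply: prob_switch_event_le; [exact: malpha|exact: indep|exact: law|exact: disp].
rewrite !card_prod !card_ord card_bool lee_fin !natrM.
by rewrite [leRHS](_ : _ = T%:R * (N%:R * kappa%:R * 2) * rho) //; ring.
Qed.
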